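(* Let $G$ be a finite undirected graph and $\tau\ge1$, $k$ integers. Then the $(k+1,\tau)$-truss of $G$ is contained in the $(k,\tau)$-truss of $G$.
   Context: Graphs are finite, simple, undirected and unweighted; paths may repeat vertices and their length is the number of edges. For vertices $v,u$ of a graph $H$, $u$ is $\tau$-hop reachable from $v$ in $H$ if there is a path between them in $H$ of length at most $\tau$. $N_\tau(v,H)$ is the set of vertices $u\ne v$ that are $\tau$-hop reachable from $v$ in $H$. For an edge $e=(u,v)$ of $H$, $\Delta_\tau(e,H)=N_\tau(u,H)\cap N_\tau(v,H)$ and $\mathrm{sup}_\tau(e,H)=|\Delta_\tau(e,H)|$. The $(k,\tau)$-truss of $G$ is the maximal subgraph $G'$ of $G$ such that $\mathrm{sup}_\tau(e,G')\ge k-2$ for every edge $e\in E(G')$ (supports computed inside $G'$) and no more edges of $G$ can be added while keeping this property; a subgraph is determined by its edge set. *)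

From mathcomp Require Import all_boot all_order all_algebra.
Set Implicit Arguments. Unset Strict Implicit. Unset Printing Implicit Defensive.
Import Order.TTheory GRing.Theory Num.Theory.

(* An edge is an unordered pair, represented as the 2-element set [set u; v].
   A subgraph is determined by its edge set E : {set {set T}}. *)

Definition simple_graph (T : finType) (adj : rel T) : Prop :=
  symmetric adj /\ irreflexive adj.

Definition edges (T : finType) (adj : rel T) : {set {set T}} :=
  [set [set x.1; x.2] | x in [set x : T * T | adj x.1 x.2]].

Definition sadj (T : finType) (E : {set {set T}}) : rel T :=
  fun u v => (u != v) && ([set u; v] \in E).

Definition hop_reach (T : finType) (E : {set {set T}}) (tau : nat) (v u : T) : bool :=
  [exists n : 'I_tau.+1, exists p : n.-tuple T,
     path (sadj E) v p && (last v p == u)].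

Definition Nhood (T : finType) (E : {set {set T}}) (tau : nat) (v : T) : {set T} :=
  [set u | (u != v) && hop_reach E tau v u].

Definition support (T : finType) (E : {set {set T}}) (tau : nat) (u v : T) : nat :=
  #|Nhood E tau u :&: Nhood E tau v|.

Definition truss_cond (T : finType) (E : {set {set T}}) (k : int) (tau : nat) : Prop :=
  forall u v : T, u != v -> [set u; v] \in E ->
    (k - 2 <= (support E tau u v)%:Z)%R.

Definition is_truss (T : finType) (adj : rel T) (k : int) (tau : nat)
    (E : {set {set T}}) : Prop :=
  E \subset edges adj /\ truss_cond E k tau /\
  (forall E' : {set {set T}}, E \subset E' -> E' \subset edges adj ->
     truss_cond E' k tau -> E' = E).

(* Enlarging the edge set only adds walks, so tau-hop neighbourhoods and
   supports are monotone in the subgraph; hence the union of two subgraphs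
   satisfying the support condition satisfies it as well, and the truss, being
   maximal, contains every subgraph of G satisfying the condition. The
   (k+1,tau)-truss satisfies the weaker k-condition, so it lies in the
   (k,tau)-truss. *)

From Pilot Require Import Defs.
From mathcomp Require Import all_boot all_order all_algebra.
Set Implicit Arguments. Unset Strict Implicit. Unset Printing Implicit Defensive.
Import Order.TTheory GRing.Theory Num.Theory.

Section Monotonicity.

Variables (T : finType) (E E' : {set {set T}}) (tau : nat).
Hypothesis sEE' : E \subset E'.

Lemma sadj_subset : subrel (sadj E) (sadj E').
Proof. by move=> u v /andP[uv uvE]; rewrite /sadj uv (subsetP sEE'). Qed.

Lemma hop_reach_subset v u : hop_reach E tau v u -> hop_reach E' tau v u.
Proof.
case/existsP=> n /existsP[p /andP[pathp lastp]].
apply/existsP; exists n; apply/existsP; exists p.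
by rewrite lastp andbT (sub_path sadj_subset).
Qed.

Lemma Nhood_subset v : Nhood E tau v \subset Nhood E' tau v.
Proof.
by apply/subsetP=> u; rewrite !inE => /andP[-> /hop_reach_subset].
Qed.

Lemma support_subset u v :
  (Defs.support E tau u v <= Defs.support E' tau u v)%N.
Proof. by apply/subset_leq_card/setISS; apply: Nhood_subset. Qed.

End Monotonicity.

Lemma truss_cond_le (T : finType) (E : {set {set T}}) (k k' : int) tau :
  (k' <= k)%R -> truss_cond E k tau -> truss_cond E k' tau.
Proof.
by move=> lek' cond u v uv uvE; apply: le_trans (cond u v uv uvE); rewrite lerD2r.
Qed.

Lemma truss_condU (T : finType) (E E' : {set {set T}}) k tau :
  truss_cond E k tau -> truss_cond E' k tau -> truss_cond (E :|: E') k tau.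
Proof.
move=> condE condE' u v uv; rewrite inE => /orP[uvE|uvE'].
- apply: le_trans (condE u v uv uvE) _.
  by rewrite lez_nat support_subset ?subsetUl.
- apply: le_trans (condE' u v uv uvE') _.
  by rewrite lez_nat support_subset ?subsetUr.
Qed.

Lemma truss_max (T : finType) (adj : rel T) k tau (E E' : {set {set T}}) :
  is_truss adj k tau E -> E' \subset edges adj -> truss_cond E' k tau ->
  E' \subset E.
Proof.
move=> [sE [condE maxE]] sE' condE'.
have <- : E :|: E' = E.
  by apply: maxE; rewrite ?subsetUl ?subUset ?sE ?sE' //; apply: truss_condU.
exact: subsetUr.
Qed.

Theorem lemma1 (T : finType) (adj : rel T) (tau : nat) (k : int)
    (E1 E2 : {set {set T}}) :
  simple_graph adj -> (1 <= tau)%N ->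
  is_truss adj (k + 1)%R tau E1 -> is_truss adj k tau E2 ->
  E1 \subset E2.
Proof.
move=> _ _ [sE1 [condE1 _]] truss2.
apply: (truss_max truss2 sE1).
by apply: truss_cond_le condE1; rewrite lerDl.
Qed.
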